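(* Let $\Phi=\{\varphi_i\}_{i\in\Lambda}$ be a similarity IFS in $\mathbb{R}^d$ with contraction ratios $\{r_i\}_{i\in\Lambda}$ and attractor $K$, and let $r_{\min}=\min_ir_i$. Let $T$ be a tree with alphabet $\Lambda$ which is $(K,c)$-diffuse for some $c>0$. Then $\gamma_\Phi(\partial T)$ is hyperplane $c\,\frac{r_{\min}}{\operatorname{diam}(K)}$-diffuse.
   Context: A similarity IFS is a finite family of contracting similarities $\varphi_i$ of $\mathbb{R}^d$ with ratios $r_i\in(0,1)$; its attractor $K$ satisfies $K=\bigcup_i\varphi_iK$; $\varphi_{i_1\dots i_n}=\varphi_{i_1}\circ\cdots\circ\varphi_{i_n}$; $\gamma_\Phi(j)$ is the point of $\bigcap_n\varphi_{j_1\dots j_n}(K)$ for $j\in\Lambda^{\mathbb{N}}$. A tree is a prefix-closed set $T$ of finite words over $\Lambda$ containing the empty word; $W_T(i)=\{a\in\Lambda: ia\in T\}$; $\partial T$ = infinite words whose prefixes all lie in $T$. A finite set $A$ of words is $(K,c)$-diffuse if for every affine hyperplane $\mathcal{L}$ there is $j\in A$ with $\varphi_jK\cap\mathcal{L}^{(c)}=\emptyset$ ($\mathcal{L}^{(c)}$ the open $c$-neighborhood). $T$ is $(K,c)$-diffuse if $W_T(i)$ is $(K,c)$-diffuse for every $i\in T$. A closed set $E$ is hyperplane $\beta$-diffuse if there is $\xi_0>0$ such that for all $\xi\in(0,\xi_0)$, $x\in E$, and affine hyperplanes $\mathcal{L}$, $E\cap B_\xi(x)\setminus\mathcal{L}^{(\beta\xi)}\ne\emptyset$.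 *)

From HB Require Import structures.
From mathcomp Require Import all_boot all_order all_algebra.
From mathcomp Require Import all_classical all_reals topology normedtype.
Set Implicit Arguments. Unset Strict Implicit. Unset Printing Implicit Defensive.
Import Order.TTheory GRing.Theory Num.Theory.
Import numFieldTopology.Exports numFieldNormedType.Exports.
Local Open Scope classical_set_scope.
Local Open Scope ring_scope.

Section Defs.
Variables (R : realType) (d : nat).
Notation pt := 'rV[R]_d.

Definition edist (x y : pt) : R := Num.sqrt (\sum_(k < d) (x 0 k - y 0 k) ^+ 2).

Definition similarity (f : pt -> pt) (r : R) : Prop :=
  forall x y, edist (f x) (f y) = r * edist x y.

Definition diam (K : set pt) : R :=
  sup [set t | exists x y, K x /\ K y /\ t = edist x y].

Definition affine_hyperplane (L : set pt) : Prop :=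
  exists (a : pt) (b : R), a != 0 /\ L = [set x | \sum_(k < d) a 0 k * x 0 k = b].

Definition nbhd_set (L : set pt) (c : R) : set pt :=
  [set x | exists y, L y /\ edist x y < c].

Definition cball (x : pt) (xi : R) : set pt := [set y | edist x y <= xi].

Definition hyperplane_diffuse (beta : R) (E : set pt) : Prop :=
  closed E /\
  exists xi0 : R, 0 < xi0 /\
    forall xi x L, 0 < xi -> xi < xi0 -> E x -> affine_hyperplane L ->
      exists y, E y /\ cball x xi y /\ ~ nbhd_set L (beta * xi) y.

Variable (Lam : finType) (phi : Lam -> pt -> pt).

Definition phiw (w : seq Lam) : pt -> pt := foldr (fun i f => phi i \o f) id w.

Definition prefix (j : nat -> Lam) (n : nat) : seq Lam := mkseq j n.

Definition gamma_pt (K : set pt) (j : nat -> Lam) (x : pt) : Prop :=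
  forall n, (phiw (prefix j n) @` K) x.

Definition is_tree (T : set (seq Lam)) : Prop :=
  T [::] /\ forall w n, T w -> T (take n w).

Definition W_T (T : set (seq Lam)) (i : seq Lam) : set Lam := [set a | T (rcons i a)].

Definition boundary (T : set (seq Lam)) : set (nat -> Lam) :=
  [set j | forall n, T (prefix j n)].

Definition gamma_img (K : set pt) (A : set (nat -> Lam)) : set pt :=
  [set x | exists j, A j /\ gamma_pt K j x].

Definition diffuse_words (K : set pt) (c : R) (A : set (seq Lam)) : Prop :=
  forall L, affine_hyperplane L ->
    exists w, A w /\ phiw w @` K `&` nbhd_set L c = set0.

Definition diffuse_tree (K : set pt) (c : R) (T : set (seq Lam)) : Prop :=
  forall i, T i -> diffuse_words K c [set [:: a] | a in W_T T i].

End Defs.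

(* A similarity of ratio r > 0 of R^d is an affine bijection, so it maps
   hyperplanes to hyperplanes, and c-neighbourhoods of them to
   rc-neighbourhoods.  Given x = gamma(j) and xi < diam K, let w = j|(m+1) be
   the first prefix with r_w diam K <= xi; then r_w > r_min xi / diam K.
   Diffuseness of T at w, applied to phi_w^-1(L), yields a child wa with
   phi_wa(K) outside L^(c r_w), which contains L^(beta xi), and any point of
   gamma(dT) through wa lies within xi of x. *)

From Pilot Require Import Defs.
From mathcomp Require Import all_boot all_order all_algebra.
From mathcomp Require Import all_classical all_reals topology normedtype.
From mathcomp Require Import sequences ring lra.
Import Order.TTheory GRing.Theory Num.Theory.
Import numFieldTopology.Exports numFieldNormedType.Exports.
Set Implicit Arguments. Unset Strict Implicit. Unset Printing Implicit Defensive.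
Local Open Scope classical_set_scope.
Local Open Scope ring_scope.

Local Notation edist := Defs.edist.
Local Notation prefix := Defs.prefix.

Section DotProduct.
Variables (R : realType) (d : nat).
Notation pt := 'rV[R]_d.

Definition dot (x y : pt) : R := \sum_(k < d) x 0 k * y 0 k.

Lemma dotC x y : dot x y = dot y x.
Proof. by apply: eq_bigr => k _; rewrite mulrC. Qed.

Lemma dot0l z : dot 0 z = 0.
Proof. by rewrite /dot big1 // => k _; rewrite mxE mul0r. Qed.

Lemma dotDl x y z : dot (x + y) z = dot x z + dot y z.
Proof. by rewrite /dot -big_split; apply: eq_bigr => k _; rewrite mxE mulrDl. Qed.

Lemma dotBl x y z : dot (x - y) z = dot x z - dot y z.
Proof.
by rewrite /dot -sumrB; apply: eq_bigr => k _; rewrite !mxE mulrBl.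
Qed.

Lemma dotZl a x z : dot (a *: x) z = a * dot x z.
Proof. by rewrite /dot mulr_sumr; apply: eq_bigr => k _; rewrite mxE mulrA. Qed.

Lemma dotDr x y z : dot z (x + y) = dot z x + dot z y.
Proof. by rewrite dotC dotDl !(dotC z). Qed.

Lemma dotBr x y z : dot z (x - y) = dot z x - dot z y.
Proof. by rewrite dotC dotBl !(dotC z). Qed.

Lemma dotZr a x z : dot z (a *: x) = a * dot z x.
Proof. by rewrite dotC dotZl dotC. Qed.

Lemma dot_suml (I : finType) (F : I -> pt) z :
  dot (\sum_i F i) z = \sum_i dot (F i) z.
Proof. exact: (big_morph (fun u => dot u z) (fun u v => dotDl u v z) (dot0l z)). Qed.

Lemma dot_sumr (I : finType) (F : I -> pt) z :
  dot z (\sum_i F i) = \sum_i dot z (F i).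
Proof. by rewrite dotC dot_suml; apply: eq_bigr => i _; rewrite dotC. Qed.

Lemma dot_eq0 x : dot x x = 0 -> x = 0.
Proof.
move=> /eqP; rewrite psumr_eq0 => [/allP x0|k _]; last by rewrite -expr2 sqr_ge0.
apply/rowP => k; rewrite mxE.
by have /x0 := mem_index_enum k; rewrite /= mulf_eq0 orbb => /eqP.
Qed.

Lemma dot_mulmxr a z (M : 'M[R]_d) : dot a (z *m M) = dot (a *m M^T) z.
Proof.
have dotE x y : dot x y = (x *m y^T) 0 0.
  by rewrite mxE; apply: eq_bigr => k _; rewrite mxE.
by rewrite !dotE trmx_mul mulmxA.
Qed.

Lemma dot_deltal i z : dot (delta_mx 0 i) z = z 0 i.
Proof.
rewrite /dot (bigD1 i) //= big1 ?addr0; first by rewrite mxE !eqxx mul1r.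
by move=> k ki; rewrite mxE eqxx (negbTE ki) mul0r.
Qed.

Lemma dot_polar u v : dot u v = (dot u u + dot v v - dot (u - v) (u - v)) / 2.
Proof. by rewrite dotBl !dotBr [dot v u]dotC; field. Qed.

Lemma edist_sqr x y : edist x y ^+ 2 = dot (x - y) (x - y).
Proof.
rewrite sqr_sqrtr; last by apply: sumr_ge0 => k _; rewrite sqr_ge0.
by apply: eq_bigr => k _; rewrite !mxE expr2.
Qed.

End DotProduct.

Section AffineBijections.
Variables (R : realType) (d : nat).
Notation pt := 'rV[R]_d.

Definition affine_bijection (g : pt -> pt) :=
  exists (M N : 'M[R]_d) (b : pt), N *m M = 1%:M /\ forall x, g x = x *m M + b.

Lemma affine_bijection_id : affine_bijection id.
Proof.
by exists 1%:M, 1%:M, 0; rewrite mulmx1; split=> // x; rewrite mulmx1 addr0.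
Qed.

Lemma affine_bijection_comp f g :
  affine_bijection f -> affine_bijection g -> affine_bijection (f \o g).
Proof.
move=> [M1 [N1 [b1 [NM1 f1]]]] [M2 [N2 [b2 [NM2 g2]]]].
exists (M2 *m M1), (N1 *m N2), (b2 *m M1 + b1); split.
  by rewrite mulmxA -(mulmxA N1) NM2 mulmx1 NM1.
by move=> x /=; rewrite g2 f1 mulmxDl mulmxA addrA.
Qed.

Lemma affine_bijection_surj g : affine_bijection g -> forall v, exists z, g z = v.
Proof.
move=> [M [N [b [NM gE]]]] v; exists ((v - b) *m N).
by rewrite gE -mulmxA NM mulmx1 subrK.
Qed.

Lemma affine_hyperplane_preimage g L :
  affine_bijection g -> affine_hyperplane L -> affine_hyperplane (g @^-1` L).
Proof.
move=> [M [N [b [NM gE]]]] [a [t [a0 ->]]].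
exists (a *m M^T), (t - dot a b); split.
  apply: contra a0 => /eqP aM0; apply/eqP/dot_eq0.
  have {2}-> : a = (a *m N) *m M by rewrite -mulmxA NM mulmx1.
  by rewrite dot_mulmxr aM0 dot0l.
apply/seteqP; split=> z; rewrite /preimage /= gE.
  change (dot a (z *m M + b) = t -> dot (a *m M^T) z = t - dot a b).
  by rewrite dotDr dot_mulmxr => <-; rewrite addrK.
change (dot (a *m M^T) z = t - dot a b -> dot a (z *m M + b) = t).
by rewrite dotDr dot_mulmxr => ->; rewrite subrK.
Qed.

(* Polarization shows that [h := f - f 0] scales all inner products by [r^2];
   comparing [h] with the linear map [x |-> x *m M] whose rows are the images
   of the standard basis then gives [|h x - x *m M|^2 = 0]. *)
Lemma similarity_affine_bijection f r :
  0 < r -> similarity f r -> affine_bijection f.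
Proof.
move=> r0 sf; pose h x := f x - f 0.
have dot_hB x y : dot (h x - h y) (h x - h y) = r ^+ 2 * dot (x - y) (x - y).
  by rewrite /h opprB addrA subrK -!edist_sqr sf exprMn.
have dot_hh x : dot (h x) (h x) = r ^+ 2 * dot x x.
  by have := dot_hB x 0; rewrite /h subrr !subr0.
have dot_h x y : dot (h x) (h y) = r ^+ 2 * dot x y.
  by rewrite dot_polar (dot_polar x y) dot_hB !dot_hh; ring.
pose M := \matrix_(i < d, j < d) h (delta_mx 0 i) 0 j.
have mulM x : x *m M = \sum_i x 0 i *: h (delta_mx 0 i).
  rewrite mulmx_sum_row; apply: eq_bigr => i _; congr (_ *: _).
  by apply/rowP => j; rewrite !mxE.
have dot_hM z x : dot (h z) (x *m M) = r ^+ 2 * dot z x.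
  rewrite mulM dot_sumr [dot z x]/dot mulr_sumr; apply: eq_bigr => i _.
  by rewrite dotZr dot_h dotC dot_deltal; ring.
have dot_MM x : dot (x *m M) (x *m M) = r ^+ 2 * dot x x.
  rewrite {1}mulM dot_suml [dot x x]/dot mulr_sumr; apply: eq_bigr => i _.
  by rewrite dotZl dot_hM dot_deltal; ring.
have hE x : h x = x *m M.
  apply/eqP; rewrite -subr_eq0; apply/eqP/dot_eq0.
  rewrite dotBl !(dotBr (h x) (x *m M)) dot_hh dot_hM dot_MM [dot (x *m M) _]dotC dot_hM.
  by ring.
have MMt : M *m M^T = (r ^+ 2)%:M.
  apply/matrixP => i j; rewrite !mxE.
  transitivity (dot (h (delta_mx 0 i)) (h (delta_mx 0 j))).
    by apply: eq_bigr => k _; rewrite !mxE.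
  by rewrite dot_h dot_deltal mxE eqxx mulr_natr.
exists M, ((r ^+ 2)^-1 *: M^T), (f 0); split; last by move=> x; rewrite -hE /h subrK.
apply: mulmx1C; rewrite -scalemxAr MMt -scalemx1 scalerA mulVf ?scale1r //.
by rewrite expf_neq0 // gt_eqF.
Qed.

End AffineBijections.

Lemma closure_bigcup_finite (T : topologicalType) (I : finType) (F : I -> set T) x :
  closure (\bigcup_(i in [set: I]) F i) x -> exists i, closure (F i) x.
Proof.
move=> clx; apply: contrapT => /forallNP ncl.
have : nbhs x (fun y => forall i, ~ closure (F i) y).
  apply: filter_forall => i; apply: open_nbhs_nbhs; split; last exact: ncl.
  exact/closed_openC/closed_closure.
by move=> /clx [y [[i _ Fy] ncly]]; apply: (ncly i); exact: subset_closure.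
Qed.

Section EuclideanTopology.
Variables (R : realType) (d : nat).
Notation pt := 'rV[R]_d.

Lemma edist_ge0 (x y : pt) : 0 <= edist x y.
Proof. exact: sqrtr_ge0. Qed.

Lemma edistxx (x : pt) : edist x x = 0.
Proof. by rewrite /edist big1 ?sqrtr0 // => k _; rewrite subrr expr0n. Qed.

Lemma entry_le_edist (x y : pt) k : `|x 0 k - y 0 k| <= edist x y.
Proof.
rewrite -sqrtr_sqr ler_sqrt; last by apply: sumr_ge0 => i _; rewrite sqr_ge0.
by rewrite (bigD1 k) //= lerDl; apply: sumr_ge0 => i _; rewrite sqr_ge0.
Qed.

Lemma norm_le_edist (x y : pt) : `|x - y| <= edist x y.
Proof.
rewrite [X in X <= _]/Num.norm /= mx_normrE.
apply: bigmax_le => [|[i k] _ /=]; first exact: edist_ge0.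
by rewrite (ord1 i) !mxE; exact: entry_le_edist.
Qed.

Lemma entry_le_norm (u : pt) k : `|u 0 k| <= `|u|.
Proof.
rewrite [X in _ <= X]/Num.norm /= mx_normrE.
exact: (le_bigmax _ (fun ij : 'I_1 * 'I_d => `|u ij.1 ij.2|) (0, k)).
Qed.

Lemma edist_le_norm (x y : pt) : edist x y <= d%:R * `|x - y|.
Proof.
have n0 := normr_ge0 (x - y).
rewrite -[X in _ <= X]ger0_norm ?mulr_ge0 // -sqrtr_sqr ler_sqrt ?sqr_ge0 //.
apply: (@le_trans _ _ (\sum_(k < d) `|x - y| ^+ 2)).
  apply: ler_sum => k _; rewrite -real_normK ?num_real //.
  have := entry_le_norm (x - y) k; rewrite !mxE => /(lerXn2r 2).
  by apply; exact: normr_ge0.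
rewrite sumr_const card_ord exprMn -[X in X <= _]mulr_natl ler_wpM2r ?sqr_ge0 //.
by rewrite -natrX ler_nat; case: d => // m; rewrite expnS leq_pmulr.
Qed.

Lemma nbhs_edistP (x : pt) (A : set pt) :
  nbhs x A <-> exists2 e : R, 0 < e & forall y, edist x y < e -> A y.
Proof.
split=> [|[e e0 sA]].
  move=> /(@nbhs_ballP R [the pseudoMetricType R of pt] x) [e /= e0 sA].
  exists e => // y xy; apply: sA; rewrite -ball_normE /=.
  exact: le_lt_trans (norm_le_edist x y) xy.
apply/(@nbhs_ballP R [the pseudoMetricType R of pt] x).
have d1 : 0 < d%:R + 1 :> R by rewrite ltr_pwDr.
exists (e / (d%:R + 1)); first by rewrite /= divr_gt0.
move=> y; rewrite -ball_normE /= ltr_pdivlMr // => xy; apply: sA.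
have := normr_ge0 (x - y); have := edist_le_norm x y; nra.
Qed.

Lemma similarity_continuous (f : pt -> pt) s : 0 <= s -> similarity f s -> continuous f.
Proof.
move=> s0 sf x A /nbhs_edistP [e e0 sA]; apply/nbhs_edistP.
have s1 : 0 < s + 1 by rewrite ltr_pwDr.
exists (e / (s + 1)) => [|y]; first by rewrite divr_gt0.
rewrite ltr_pdivlMr // => xy; apply: sA; rewrite sf.
have := edist_ge0 x y; nra.
Qed.

Lemma similarity_image_closed (f : pt -> pt) s (K : set pt) :
  0 <= s -> similarity f s -> compact K -> closed (f @` K).
Proof.
move=> s0 sf cK; apply: compact_closed; first exact: norm_hausdorff.
apply: continuous_compact => //; apply: continuous_subspaceT.
exact: similarity_continuous sf.
Qed.

Lemma compact_edist_bounded (K : set pt) : compact K ->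
  exists B, forall x y, K x -> K y -> edist x y <= B.
Proof.
move=> /compact_bounded [M [_ KM]].
have Kbd : K `<=` [set x | `|x| <= `|M| + 1].
  by apply: KM; rewrite (le_lt_trans (ler_norm M)) ?ltrDl.
exists (d%:R * ((`|M| + 1) + (`|M| + 1))) => x y Kx Ky.
apply: le_trans (edist_le_norm x y) _; apply: ler_wpM2l => //.
by apply: le_trans (ler_normB x y) _; apply: lerD; exact: Kbd.
Qed.

Lemma nbhd_set_le (L : set pt) c1 c2 : c1 <= c2 -> nbhd_set L c1 `<=` nbhd_set L c2.
Proof. by move=> c12 x [y [Ly xy]]; exists y; split => //; exact: lt_le_trans c12. Qed.

Lemma nbhd_set_similarity f s (L : set pt) c z :
  0 < s -> similarity f s -> (forall v, exists u, f u = v) ->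
  nbhd_set L (c * s) (f z) -> nbhd_set (f @^-1` L) c z.
Proof.
move=> s0 sf f_surj [l [Ll fzl]]; have [u fu] := f_surj l.
by exists u; split; [rewrite /preimage /= fu | rewrite -(ltr_pM2r s0) mulrC -sf fu].
Qed.

End EuclideanTopology.

Section Words.
Variable Lam : finType.

Lemma prefixS (j : nat -> Lam) n : prefix j n.+1 = rcons (prefix j n) (j n).
Proof. exact: mkseqS. Qed.

Lemma size_prefix (j : nat -> Lam) n : size (prefix j n) = n.
Proof. exact: size_mkseq. Qed.

Lemma prefix_take (j : nat -> Lam) n m : (n <= m)%N -> prefix j n = take n (prefix j m).
Proof.
move=> nm; apply: (@eq_from_nth _ (j 0%N)) => [|k].
  by rewrite size_takel ?size_prefix.
by rewrite size_prefix => kn; rewrite nth_take // !nth_mkseq // (leq_trans kn nm).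
Qed.

Lemma extend_word (P : seq Lam -> Prop) u :
  P u -> (forall v, P v -> exists a, P (rcons v a)) ->
  exists j : nat -> Lam, prefix j (size u) = u /\ forall m, P (prefix j (size u + m)).
Proof.
move=> Pu child; have [a0 _] := child u Pu.
have [g Pg] : {g : seq Lam -> Lam & forall v, P v -> P (rcons v (g v))}.
  apply: (@choice _ _ (fun v a => P v -> P (rcons v a))) => v.
  by case: (pselect (P v)) => [/child [a Pa] | nPv]; [exists a | exists a0].
pose U m := iter m (fun v => rcons v (g v)) u.
have PU m : P (U m) by elim: m => //= m IH; apply: Pg.
pose j k := if (k < size u)%N then nth a0 u k else g (U (k - size u)%N).
have ju : prefix j (size u) = u.
  apply: (@eq_from_nth _ a0) => [|k]; rewrite size_prefix // => ku.
  by rewrite nth_mkseq // /j ku.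
have jU m : prefix j (size u + m) = U m.
  elim: m => [|m IH]; first by rewrite addn0.
  by rewrite addnS prefixS IH /j ltnNge leq_addr /= addKn.
by exists j; split => // m; rewrite jU.
Qed.

Variables (R : realType) (d : nat) (phi : Lam -> 'rV[R]_d -> 'rV[R]_d).

Lemma phiw_cat w v x : phiw phi (w ++ v) x = phiw phi w (phiw phi v x).
Proof. by elim: w => //= i w ->. Qed.

Lemma phiw_rcons w a x : phiw phi (rcons w a) x = phiw phi w (phi a x).
Proof. by rewrite -cats1 phiw_cat. Qed.

Lemma phiw_similarity (r : Lam -> R) : (forall i, similarity (phi i) (r i)) ->
  forall w, similarity (phiw phi w) (\prod_(i <- w) r i).
Proof.
move=> sim; elim => [|i w IH] x y /=; first by rewrite big_nil mul1r.
by rewrite big_cons sim IH mulrA.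
Qed.

Lemma phiw_affine_bijection (r : Lam -> R) : (forall i, 0 < r i) ->
  (forall i, similarity (phi i) (r i)) -> forall w, affine_bijection (phiw phi w).
Proof.
move=> r0 sim; elim => [|i w IH] /=; first exact: affine_bijection_id.
exact/affine_bijection_comp/IH/(similarity_affine_bijection (r0 i) (sim i)).
Qed.

End Words.

Section Attractor.
Variables (R : realType) (d : nat) (Lam : finType).
Variables (phi : Lam -> 'rV[R]_d -> 'rV[R]_d) (r : Lam -> R) (K : set 'rV[R]_d).
Hypotheses (r_gt0 : forall i, 0 < r i) (r_lt1 : forall i, r i < 1).
Hypothesis sim : forall i, similarity (phi i) (r i).
Hypotheses (cK : compact K) (K0 : K !=set0) (phiK : forall i k, K k -> K (phi i k)).

Definition word_ratio (w : seq Lam) : R := \prod_(i <- w) r i.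

Lemma word_ratio_gt0 w : 0 < word_ratio w.
Proof. exact: prodr_gt0. Qed.

Lemma word_ratio_rcons w a : word_ratio (rcons w a) = word_ratio w * r a.
Proof. by rewrite /word_ratio -cats1 big_cat big_seq1. Qed.

Lemma word_ratio_prefix_small (j : nat -> Lam) e :
  0 < e -> exists n, word_ratio (prefix j n) <= e.
Proof.
move=> e0; pose q := \big[Order.max/0]_i r i.
have q0 : 0 <= q by exact: bigmax_ge_id.
have rq i : r i <= q by exact: le_bigmax.
have q1 : q < 1 by apply: bigmax_lt.
have /cvgrPdist_lt /(_ e e0) [N _ qN] : q ^+ n @[n --> \oo] --> 0.
  by apply: cvg_expr; rewrite ger0_norm.
exists N; apply: (@le_trans _ _ (q ^+ N)); last first.
  by have := qN N (leqnn N); rewrite sub0r normrN ger0_norm ?exprn_ge0 // => /ltW.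
elim: N {qN} => [|n IH]; first by rewrite /word_ratio /= big_nil expr0.
rewrite prefixS word_ratio_rcons exprSr ler_pM //.
  exact: ltW (word_ratio_gt0 _).
exact: ltW (r_gt0 _).
Qed.

Lemma phiw_sub w k : K k -> K (phiw phi w k).
Proof. by elim: w => //= i w IH Kk; exact/phiK/IH. Qed.

Lemma phiw_image_closed w : closed (phiw phi w @` K).
Proof.
apply: (similarity_image_closed _ (phiw_similarity sim w)) => //.
exact: ltW (word_ratio_gt0 w).
Qed.

Lemma cylinder_nested (j : nat -> Lam) i n : (i <= n)%N ->
  phiw phi (prefix j n) @` K `<=` phiw phi (prefix j i) @` K.
Proof.
move=> ni _ [k Kk <-]; rewrite (prefix_take j ni).
have -> : phiw phi (prefix j n) k =
    phiw phi (take i (prefix j n)) (phiw phi (drop i (prefix j n)) k).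
  by rewrite -phiw_cat cat_take_drop.
by apply: imageP; exact: phiw_sub.
Qed.

Lemma gamma_pt_exists (j : nat -> Lam) : exists y, gamma_pt phi K j y.
Proof.
have [k0 Kk0] := K0.
move: cK; rewrite compact_In0.
move=> /(_ nat setT (fun n => K `&` phiw phi (prefix j n) @` K)).
case=> [|D _|y Dy]; last by exists y => n; case: (Dy n I).
  by exists (fun n => phiw phi (prefix j n) @` K) => // n _; exact: phiw_image_closed.
pose N := (\max_(i <- finmap.enum_fset D) i)%N.
exists (phiw phi (prefix j N) k0) => i /= iD; split; first exact: phiw_sub.
have iN : (i <= N)%N by apply: (@leq_bigmax_seq _ _ xpredT id).
by apply: (cylinder_nested iN); exact: imageP.
Qed.

Definition cylinder (v : seq Lam) : set (nat -> Lam) := [set j | prefix j (size v) = v].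

Lemma gamma_img_cylinder_sub (A : set (nat -> Lam)) v :
  gamma_img phi K (A `&` cylinder v) `<=` phiw phi v @` K.
Proof. by move=> y [j [[_ jv] gy]]; have := gy (size v); rewrite jv. Qed.

Lemma gamma_img_cylinder_split (A : set (nat -> Lam)) v :
  gamma_img phi K (A `&` cylinder v) `<=`
  \bigcup_(a in [set: Lam]) gamma_img phi K (A `&` cylinder (rcons v a)).
Proof.
move=> y [j [[Aj jv] gy]]; exists (j (size v)) => //; exists j; split => //; split => //.
by rewrite /cylinder /= size_rcons prefixS jv.
Qed.

(* A point of the closure of the image lies, for every n, in the closure of
   the images of the cylinders of some word of length n; these words form a
   finitely branching tree, along a branch of which the point is [gamma j]. *)
Lemma closed_gamma_img (T : set (seq Lam)) : closed (gamma_img phi K (boundary T)).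
Proof.
move=> x clx.
pose near_x v := closure (gamma_img phi K (boundary T `&` cylinder v)) x.
have near_nil : near_x [::].
  by apply: closureS clx => y [j [Tj gy]]; exists j.
have near_child v : near_x v -> exists a, near_x (rcons v a).
  by move=> /(closureS (@gamma_img_cylinder_split (boundary T) v)) /closure_bigcup_finite.
have [j [_ near_j]] := extend_word near_nil near_child.
exists j; split => n; have /= := near_j n; rewrite add0n => clj.
- have [y [[j' [[Tj' j'j] _]] _]] := clj setT filterT.
  by move: (Tj' n); rewrite -j'j size_prefix.
- apply: phiw_image_closed; apply: closureS clj; exact: gamma_img_cylinder_sub.
Qed.

Lemma diam_ub k1 k2 : K k1 -> K k2 -> edist k1 k2 <= diam K.
Proof.
move=> Kk1 Kk2; apply: sup_upper_bound; last by exists k1, k2.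
split; first by exists (edist k1 k2), k1, k2.
have [B KB] := compact_edist_bounded cK.
by exists B => _ [x [y [Kx [Ky ->]]]]; exact: KB.
Qed.

Lemma diam_ge0 : 0 <= diam K.
Proof. by have [k Kk] := K0; rewrite -(edistxx k) diam_ub. Qed.

Lemma critical_level (j : nat -> Lam) xi : 0 < xi -> xi < diam K ->
  exists m, word_ratio (prefix j m.+1) * diam K <= xi < word_ratio (prefix j m) * diam K.
Proof.
move=> xi0 xiD; have D0 : 0 < diam K := lt_trans xi0 xiD.
have small : exists n, word_ratio (prefix j n) * diam K <= xi.
  have [n jn] := word_ratio_prefix_small j (divr_gt0 xi0 D0).
  by exists n; rewrite -ler_pdivlMr.
case: (ex_minnP small) => -[|m]; first by rewrite /word_ratio /= big_nil mul1r leNgt xiD.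
move=> small_m min_m; exists m; rewrite small_m /= ltNge.
by apply/negP => /min_m; rewrite ltnn.
Qed.

Section DiffuseTree.
Variables (T : set (seq Lam)) (c : R).
Hypotheses (treeT : is_tree T) (c_gt0 : 0 < c) (diffT : diffuse_tree phi K c T).

Lemma diffuse_tree_child (L : set 'rV[R]_d) v :
  affine_hyperplane L -> T v -> exists a, T (rcons v a).
Proof. by move=> hL Tv; have [_ [[a Ta <-] _]] := diffT Tv hL; exists a. Qed.

Lemma gamma_img_meets_cylinder (L : set 'rV[R]_d) u :
  affine_hyperplane L -> T u ->
  exists2 y, gamma_img phi K (boundary T) y & (phiw phi u @` K) y.
Proof.
move=> hL Tu.
have [j [ju Tj]] := extend_word Tu (fun v => diffuse_tree_child (v := v) hL).
have [y gy] := gamma_pt_exists j.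
exists y; last by have := gy (size u); rewrite ju.
exists j; split => // n; rewrite (prefix_take j (leq_addl (size u) n)).
by case: treeT => _; apply; exact: Tj.
Qed.

Lemma diffuse_child_avoids_nbhd (L : set 'rV[R]_d) w :
  affine_hyperplane L -> T w ->
  exists2 a, T (rcons w a) &
    forall k, K k -> ~ nbhd_set L (c * word_ratio w) (phiw phi (rcons w a) k).
Proof.
move=> hL Tw; have phiw_bij := phiw_affine_bijection r_gt0 sim w.
have [_ [[a Ta <-] avoid]] := diffT Tw (affine_hyperplane_preimage phiw_bij hL).
exists a => // k Kk; rewrite phiw_rcons => near_L.
suff : (phiw phi [:: a] @` K `&` nbhd_set (phiw phi w @^-1` L) c) (phi a k).
  by rewrite avoid.
split; first exact: imageP.
apply: nbhd_set_similarity near_L; first exact: word_ratio_gt0.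
  exact: phiw_similarity.
exact: affine_bijection_surj.
Qed.

Lemma gamma_img_escapes_hyperplane xi x (L : set 'rV[R]_d) :
  0 < xi -> xi < diam K -> gamma_img phi K (boundary T) x -> affine_hyperplane L ->
  exists y, gamma_img phi K (boundary T) y /\ cball x xi y /\
    ~ nbhd_set L (c * (\big[Order.min/1]_i r i) / diam K * xi) y.
Proof.
move=> xi0 xiD [j [bj gx]] hL; have D0 : 0 < diam K := lt_trans xi0 xiD.
have [m /andP[small large]] := critical_level j xi0 xiD.
have [a Ta avoid] := diffuse_child_avoids_nbhd hL (bj m.+1).
have [y Ey [k Kk yE]] := gamma_img_meets_cylinder hL Ta.
have [k1 Kk1 xE] := gx m.+1.
exists y; split => //; split.
  rewrite /cball /= -xE -yE phiw_rcons (phiw_similarity sim) (le_trans _ small) //.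
  by rewrite ler_wpM2l ?(diam_ub Kk1 (phiK a Kk)) // ltW ?word_ratio_gt0.
rewrite -yE; move: (avoid k Kk); apply: contra_not; apply: nbhd_set_le.
set rmin := \big[Order.min/1]_i r i.
have rmin0 : 0 < rmin by apply: lt_bigmin.
have rmin_le : rmin <= r (j m) by exact: bigmin_le.
have ratio_m : xi / diam K < word_ratio (prefix j m) by rewrite ltr_pdivrMr.
have q0 := word_ratio_gt0 (prefix j m).
have -> : c * rmin / diam K * xi = c * rmin * (xi / diam K) by ring.
rewrite prefixS word_ratio_rcons -mulrA ler_wpM2l ?(ltW c_gt0) // mulrC.
by rewrite ler_pM ?(ltW ratio_m) ?(ltW rmin0) ?divr_ge0 ?(ltW xi0) ?(ltW D0).
Qed.

End DiffuseTree.

End Attractor.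

Theorem proposition3p11 (R : realType) (d : nat) (Lam : finType)
  (phi : Lam -> 'rV[R]_d -> 'rV[R]_d) (r : Lam -> R) (K : set 'rV[R]_d)
  (T : set (seq Lam)) (c : R) :
  (forall i, 0 < r i < 1) ->
  (forall i, similarity (phi i) (r i)) ->
  compact K -> K !=set0 -> K = \bigcup_(i in [set: Lam]) (phi i @` K) ->
  is_tree T -> 0 < c -> diffuse_tree phi K c T ->
  hyperplane_diffuse
    (c * (\big[Order.min/1]_(i : Lam) r i) / diam K) (gamma_img phi K (boundary T)).
Proof.
move=> r01 sim cK K0 KE treeT c0 diffT.
have r_gt0 i : 0 < r i by case/andP: (r01 i).
have r_lt1 i : r i < 1 by case/andP: (r01 i).
have phiK i k : K k -> K (phi i k) by move=> Kk; rewrite KE; exists i => //; exists k.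
split; first exact: closed_gamma_img.
have [D0 | Dle0] := ltrP 0 (diam K).
  by exists (diam K); split => // xi x L xi0 xiD; exact: gamma_img_escapes_hyperplane.
(* Then [diam K = 0] and the junk value [c * rmin / 0 = 0] makes the
   neighbourhood condition vacuous. *)
have -> : diam K = 0 by apply/le_anti; rewrite Dle0 diam_ge0.
exists 1; split => // xi x L xi0 _ Ex _; exists x; split => //.
split; first by rewrite /cball /= edistxx ltW.
by rewrite invr0 mulr0 mul0r => -[l [_]]; rewrite ltNge edist_ge0.
Qed.
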